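(* Let $\rho$ be a density matrix and $\epsilon>0$. Consider the following process: a set of states $S$ is initially empty; for each query unit vector $|\psi\rangle$, let $|\psi_S\rangle$ be the orthogonal projection of $|\psi\rangle$ onto $\mathrm{span}(S)$; an oracle produces an estimate $\hat o$ with $|\langle\psi_S|\rho|\psi_S\rangle-\hat o|<\frac38\epsilon$; a mistake may be declared only if $|\langle\psi|\rho|\psi\rangle-\hat o|\ge\frac34\epsilon$, and whenever a mistake is declared, $|\psi\rangle$ is added to $S$. Then the total number of mistakes is at most $\frac{256}{9}\cdot\frac1{\epsilon^2}$.
   Context: Queries $|\psi\rangle$ may be chosen arbitrarily (adaptively); $\rho$ is positive semidefinite with unit trace. *)

From HB Require Import structures.
From mathcomp Require Import all_boot all_order all_algebra.
From mathcomp Require Import reals.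
From mathcomp Require Import complex.
Set Implicit Arguments. Unset Strict Implicit. Unset Printing Implicit Defensive.
Import Order.TTheory GRing.Theory Num.Theory.
Local Open Scope ring_scope.
Local Open Scope complex_scope.

Section Defs.
Variable R : realType.
Local Notation C := R[i].

Definition cvdot d (u v : 'cV[C]_d) : C := \sum_(i < d) (u i 0)^* * v i 0.

Definition qform d (A : 'M[C]_d) (v : 'cV[C]_d) : C := cvdot v (A *m v).

Definition unit_vec d (v : 'cV[C]_d) : Prop := cvdot v v = 1.

Definition adjmx d (A : 'M[C]_d) : 'M[C]_d := map_mx (fun z => z^*) A^T.

Definition density_matrix d (rho : 'M[C]_d) : Prop :=
  [/\ adjmx rho = rho, (forall v : 'cV[C]_d, 0 <= qform rho v) & \tr rho = 1].

Definition in_span d (S : seq 'cV[C]_d) (w : 'cV[C]_d) : Prop :=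
  exists c : nat -> C, w = \sum_(i < size S) c i *: S`_i.

Definition is_orth_proj d (S : seq 'cV[C]_d) (w wS : 'cV[C]_d) : Prop :=
  in_span S wS /\ (forall x, x \in S -> cvdot x (w - wS) = 0).

End Defs.

From HB Require Import structures.
From mathcomp Require Import all_boot all_order all_algebra.
From mathcomp Require Import reals complex sesquilinear spectral.
From mathcomp Require Import ring lra.
Import Order.TTheory GRing.Theory Num.Theory.
Local Open Scope ring_scope.
Local Open Scope complex_scope.
Local Open Scope sesquilinear_scope.
Set Implicit Arguments. Unset Strict Implicit. Unset Printing Implicit Defensive.

(* At a mistake t let v_t = psi_t - (psi_t)_S be the residual of the query.
   Residuals of distinct mistakes are orthogonal: the earlier one lies in the
   span of the later S, to which the later residual is orthogonal.  Cauchy-Schwarz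
   for the semi-inner product <x|rho|y> gives
   |<psi|rho|psi> - <psi_S|rho|psi_S>| <= 2 sqrt <v|rho|v> for unit psi, and the
   oracle and mistake conditions make the left side exceed 3 eps / 8; hence
   <v|rho|v> / <v|v> >= <v|rho|v> > 9 eps^2 / 256.  The Rayleigh quotients of an
   orthogonal family sum to tr (rho P) <= tr rho = 1, P the orthogonal projection
   onto its span, so there are at most 256 / (9 eps^2) mistakes. *)

Section InnerProduct.
Variables (R : realType) (d : nat).
Local Notation C := R[i].
Implicit Types (u v w : 'cV[C]_d) (c : C).

Lemma cvdotE u v : cvdot u v = (u ^t* *m v) 0 0.
Proof. by rewrite /cvdot !mxE; apply: eq_bigr => i _; rewrite !mxE. Qed.

Lemma cvdotC u v : cvdot v u = (cvdot u v)^*.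
Proof.
rewrite /cvdot rmorph_sum; apply: eq_bigr => i _.
by rewrite rmorphM /= conjcK mulrC.
Qed.

Lemma cvdotDl u v w : cvdot (u + v) w = cvdot u w + cvdot v w.
Proof.
by rewrite /cvdot -big_split; apply: eq_bigr => i _; rewrite !mxE rmorphD mulrDl.
Qed.

Lemma cvdotDr u v w : cvdot w (u + v) = cvdot w u + cvdot w v.
Proof.
by rewrite /cvdot -big_split; apply: eq_bigr => i _; rewrite !mxE mulrDr.
Qed.

Lemma cvdotNl u w : cvdot (- u) w = - cvdot u w.
Proof.
by rewrite /cvdot -sumrN; apply: eq_bigr => i _; rewrite !mxE rmorphN mulNr.
Qed.

Lemma cvdotZl c u w : cvdot (c *: u) w = c^* * cvdot u w.
Proof.
by rewrite /cvdot mulr_sumr; apply: eq_bigr => i _; rewrite !mxE rmorphM mulrA.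
Qed.

Lemma cvdotZr c u w : cvdot w (c *: u) = c * cvdot w u.
Proof.
by rewrite /cvdot mulr_sumr; apply: eq_bigr => i _; rewrite !mxE mulrCA.
Qed.

Lemma cvdot0l w : cvdot 0 w = 0.
Proof. by rewrite /cvdot big1 // => i _; rewrite mxE rmorph0 mul0r. Qed.

Lemma cvdot_suml (I : finType) (P : pred I) (F : I -> 'cV[C]_d) w :
  cvdot (\sum_(i | P i) F i) w = \sum_(i | P i) cvdot (F i) w.
Proof.
rewrite /cvdot exchange_big /=; apply: eq_bigr => j _.
by rewrite summxE rmorph_sum mulr_suml.
Qed.

Lemma cvdot_ge0 u : 0 <= cvdot u u.
Proof. by apply: sumr_ge0 => i _; rewrite mulrC mulcJ_ge0. Qed.

Lemma cvdot_eq0 u : (cvdot u u == 0) = (u == 0).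
Proof.
apply/eqP/eqP => [|->]; last by rewrite /cvdot big1 // => i _; rewrite mxE mulr0.
move=> /psumr_eq0P u0; apply/matrixP => i j; rewrite (ord1 j) mxE.
have /eqP : (u i 0)^* * u i 0 = 0 by apply: u0 => // k _; rewrite mulrC mulcJ_ge0.
by rewrite mulf_eq0 conjc_eq0 orbb => /eqP.
Qed.

Lemma cvdot_gt0 u : u != 0 -> 0 < cvdot u u.
Proof. by move=> u0; rewrite lt_def cvdot_eq0 u0 cvdot_ge0. Qed.

Lemma cvdot_span_eq0 (S : seq 'cV[C]_d) w y :
  in_span S w -> {in S, forall x, cvdot x y = 0} -> cvdot w y = 0.
Proof.
case=> c -> Sy; rewrite cvdot_suml big1 // => i _.
by rewrite cvdotZl Sy ?mulr0 // mem_nth.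
Qed.

Lemma cvdot_orthD u v : cvdot u v = 0 ->
  cvdot (u + v) (u + v) = cvdot u u + cvdot v v.
Proof.
move=> uv; have vu : cvdot v u = 0 by rewrite cvdotC uv conjc0.
by rewrite cvdotDl !cvdotDr uv vu addr0 add0r.
Qed.

Lemma orth_proj_residual_orth (S : seq 'cV[C]_d) w wS :
  is_orth_proj S w wS -> cvdot wS (w - wS) = 0.
Proof. by case=> /cvdot_span_eq0; apply. Qed.

Lemma orth_proj_pythagoras (S : seq 'cV[C]_d) w wS : is_orth_proj S w wS ->
  cvdot wS wS + cvdot (w - wS) (w - wS) = cvdot w w.
Proof.
by move=> /orth_proj_residual_orth /cvdot_orthD <-; rewrite addrC subrK.
Qed.

End InnerProduct.

Section TraceBound.
Variables (R : realType) (d : nat) (rho : 'M[R[i]]_d).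
Local Notation C := R[i].
Hypothesis rho_psd : forall v : 'cV[C]_d, 0 <= qform rho v.

Lemma mxtrace_adj_mul (A B : 'M[C]_d) :
  \tr (A ^t* *m B) = \sum_k cvdot (col k A) (col k B).
Proof.
by apply: eq_bigr => k _; rewrite !mxE; apply: eq_bigr => l _; rewrite !mxE.
Qed.

Lemma mxtrace_mul_orthoproj_ge0 (Q : 'M[C]_d) :
  Q ^t* = Q -> Q *m Q = Q -> 0 <= \tr (rho *m Q).
Proof.
move=> Qadj QQ; rewrite -QQ mulmxA mxtrace_mulC -[X in X *m _]Qadj.
rewrite mxtrace_adj_mul; apply: sumr_ge0 => k _.
by rewrite (colE k (rho *m Q)) -mulmxA -colE; exact: rho_psd.
Qed.

Variables (I : finType) (P : pred I) (w : I -> 'cV[C]_d).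

Definition orthoproj : 'M[C]_d :=
  \sum_(i | P i) (cvdot (w i) (w i))^-1 *: (w i *m (w i) ^t*).

Lemma orthoproj_adj : orthoproj ^t* = orthoproj.
Proof.
apply/matrixP => k l; rewrite !mxE !summxE rmorph_sum; apply: eq_bigr => i _.
rewrite !mxE rmorphM fmorphV /= !big_ord1 !mxE rmorphM /= conjCK.
rewrite [_^* * _]mulrC; congr (_^-1 * _).
(* The [conjC] of [R[i]] as a numClosedFieldType is [conjc] only up to
   conversion. *)
change (conjc (cvdot (w i) (w i)) = cvdot (w i) (w i)).
by rewrite -cvdotC.
Qed.

Lemma mxtrace_mul_orthoproj :
  \tr (rho *m orthoproj) = \sum_(i | P i) qform rho (w i) / cvdot (w i) (w i).
Proof.
rewrite mulmx_sumr raddf_sum; apply: eq_bigr => i _.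
rewrite -scalemxAr /= mxtraceZ mulmxA mxtrace_mulC mulrC; congr (_ * _).
by rewrite /qform cvdotE mulmxA trace_mx11.
Qed.

Hypothesis w_orth : forall i j, P i -> P j -> i != j -> cvdot (w i) (w j) = 0.

Lemma orthoproj_idem : orthoproj *m orthoproj = orthoproj.
Proof.
have adj_mul i j : (w i) ^t* *m w j = (cvdot (w i) (w j))%:M.
  by rewrite cvdotE; apply: mx11_scalar.
rewrite {1}/orthoproj mulmx_suml; apply: eq_bigr => i Pi.
rewrite -scalemxAl mulmx_sumr (bigD1 i) //= big1 ?addr0 => [|j /andP[Pj ji]].
  rewrite -scalemxAr -mulmxA (mulmxA (w i ^t*)) adj_mul mul_scalar_mx.
  rewrite -scalemxAr !scalerA; congr (_ *: _).
  have [->|wi0] := eqVneq (cvdot (w i) (w i)) 0; first by rewrite invr0 !mul0r.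
  by rewrite mulrA mulfVK.
rewrite -scalemxAr -mulmxA (mulmxA (w i ^t*)) adj_mul (w_orth Pi Pj) 1?eq_sym //.
by rewrite mul_scalar_mx scale0r mulmx0 scaler0.
Qed.

(* Zero vectors may occur in the family: since 0^-1 = 0 their terms vanish. *)
Lemma sum_rayleigh_le_trace :
  \sum_(i | P i) qform rho (w i) / cvdot (w i) (w i) <= \tr rho.
Proof.
have compl_adj : (1%:M - orthoproj) ^t* = 1%:M - orthoproj.
  by rewrite linearB /= map_mxB trmx1 map_mx1 orthoproj_adj.
have compl_idem : (1%:M - orthoproj) *m (1%:M - orthoproj) = 1%:M - orthoproj.
  by rewrite mulmxBl !mulmxBr !mul1mx mulmx1 orthoproj_idem subrr subr0.
have := mxtrace_mul_orthoproj_ge0 compl_adj compl_idem.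
by rewrite mulmxBr mulmx1 raddfB /= subr_ge0 mxtrace_mul_orthoproj.
Qed.
End TraceBound.

Lemma qform_le_trace (R : realType) d (rho : 'M[R[i]]_d) :
  (forall v, 0 <= qform rho v) -> forall v, qform rho v <= \tr rho * cvdot v v.
Proof.
move=> rho_psd v; have [->|v0] := eqVneq v 0.
  by rewrite /qform !cvdot0l mulr0.
have := sum_rayleigh_le_trace rho_psd (P := predT) (w := fun _ : 'I_1 => v).
rewrite big_ord1 -ler_pdivrMr ?cvdot_gt0 // mulrC; apply=> i j.
by rewrite (ord1 i) (ord1 j) eqxx.
Qed.

Section HermitianForm.
Variables (R : realType) (d : nat) (rho : 'M[R[i]]_d).
Local Notation C := R[i].
Hypothesis rho_adj : rho ^t* = rho.
Hypothesis rho_psd : forall v : 'cV[C]_d, 0 <= qform rho v.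
Local Notation q v := (complex.Re (qform rho v)).
Local Notation B u v := (cvdot u (rho *m v)).
Implicit Types (u v : 'cV[C]_d) (s r : R).

Lemma qform_real v : qform rho v = (q v)%:C.
Proof. exact/esym/RRe_real/ger0_real. Qed.

Lemma Re_qform_ge0 v : 0 <= q v.
Proof. by rewrite -ler0c -qform_real. Qed.

Lemma cvdot_hermC u v : B v u = (B u v)^*.
Proof. by rewrite cvdotC !cvdotE trmx_mul map_mxM rho_adj mulmxA. Qed.

Lemma Re_qformD u v : q (u + v) = q u + 2 * complex.Re (B u v) + q v.
Proof.
have ReJ (z : C) : complex.Re z^* = complex.Re z by case: z.
rewrite /qform mulmxDr !(cvdotDl, cvdotDr) (cvdot_hermC u v) !raddfD /= ReJ.
ring.
Qed.

Lemma Re_formZ s r u v :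
  complex.Re (B (s%:C *: u) (r%:C *: v)) = s * r * complex.Re (B u v).
Proof.
rewrite -scalemxAr cvdotZl cvdotZr.
by case: (B u v) => a b /=; ring.
Qed.

Lemma Re_qformZ s v : q (s%:C *: v) = s ^+ 2 * q v.
Proof. by rewrite /qform Re_formZ expr2. Qed.

Lemma Re_form_CauchySchwarz u v : complex.Re (B u v) ^+ 2 <= q u * q v.
Proof.
have quad s r :
    0 <= s ^+ 2 * q u + 2 * (s * r * complex.Re (B u v)) + r ^+ 2 * q v.
  by rewrite -Re_formZ -!Re_qformZ -Re_qformD Re_qform_ge0.
set a := q u in quad *; set b := q v in quad *.
set x := complex.Re (B u v) in quad *.
have a0 : 0 <= a := Re_qform_ge0 u; have b0 : 0 <= b := Re_qform_ge0 v.
have [b00|b_gt0] := eqVneq b 0.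
  have := quad x (- (a + 1)); rewrite b00; nra.
have := quad b (- x); nra.
Qed.

(* With a = q u, b = q v and x = Re <u|rho|v>: both Cauchy-Schwarz instances
   x^2 <= a b and (x + b)^2 <= q (u + v) b bound |q (u + v) - a| = |2 x + b|
   by 2 sqrt b. *)
Lemma Re_qformD_sub_sqr_le u v :
  q u <= 1 -> q (u + v) <= 1 -> (q (u + v) - q u) ^+ 2 <= 4 * q v.
Proof.
move=> a1 c1; have CSu := Re_form_CauchySchwarz u v.
have CSuv := Re_form_CauchySchwarz (u + v) v.
have yE : complex.Re (B (u + v) v) = complex.Re (B u v) + q v.
  by rewrite cvdotDl raddfD.
rewrite yE in CSuv; have cE := Re_qformD u v.
have := Re_qform_ge0 u; have := Re_qform_ge0 v.
by have [ac|ca] := lerP (q u) (q (u + v)); nra.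
Qed.

End HermitianForm.

Lemma normcR (R : realType) (x : R) : `|x%:C| = `|x|%:C :> R[i].
Proof. by rewrite normc_def /= expr0n addr0 sqrtr_sqr. Qed.

Section Mistake.
Variables (R : realType) (d : nat) (rho : 'M[R[i]]_d).
Local Notation C := R[i].
Hypothesis rho_density : density_matrix rho.
Local Notation q v := (complex.Re (qform rho v)).
Variables (S : seq 'cV[C]_d) (psi psiS : 'cV[C]_d) (o eps : R).
Hypothesis psi1 : unit_vec psi.
Hypothesis proj : is_orth_proj S psi psiS.
Hypothesis oracle : `|qform rho psiS - o%:C| < (3 / 8 * eps)%:C.
Hypothesis mistake : (3 / 4 * eps)%:C <= `|qform rho psi - o%:C|.

Lemma mistake_residual_energy : 9 / 256 * eps ^+ 2 < q (psi - psiS).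
Proof.
case: rho_density => rho_adj rho_psd tr1.
move: oracle mistake (orth_proj_pythagoras proj); rewrite psi1.
set u := psiS; set v := psi - psiS; have -> : psi = u + v by rewrite addrC subrK.
move=> h1 h2 norm1.
have q_le1 w : cvdot w w <= 1 -> q w <= 1.
  move=> w1; rewrite -lecR -(qform_real rho_psd) rmorph1.
  by apply: le_trans w1; rewrite -[X in _ <= X]mul1r -tr1 qform_le_trace.
have a1 : q u <= 1 by apply: q_le1; rewrite -norm1 lerDl cvdot_ge0.
have c1 : q (u + v) <= 1 by apply: q_le1; rewrite addrC subrK psi1.
have key := Re_qformD_sub_sqr_le rho_adj rho_psd a1 c1.
move: h1 h2; rewrite (qform_real rho_psd u) (qform_real rho_psd (u + v)).
rewrite -!rmorphB !normcR ltcR lecR => h1 h2.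
have gap : 3 / 8 * eps < `|q (u + v) - q u|.
  by have := ler_distD (q u) (q (u + v)) o; lra.
have eps0 : 0 <= 3 / 8 * eps by apply: le_trans (ltW h1).
have := real_normK (num_real (q (u + v) - q u)); nra.
Qed.

Lemma mistake_rayleigh_ge :
  (9 / 256 * eps ^+ 2)%:C <=
    qform rho (psi - psiS) / cvdot (psi - psiS) (psi - psiS).
Proof.
have := mistake_residual_energy; case: rho_density => _ rho_psd _.
set v := psi - psiS => energy.
have bound_ge0 : 0 <= 9 / 256 * eps ^+ 2 by nra.
have v_neq0 : v != 0.
  by apply: contraTneq energy => ->; rewrite /qform cvdot0l raddf0 -leNgt.
have v_le1 : cvdot v v <= 1.
  by rewrite -psi1 -(orth_proj_pythagoras proj) lerDr cvdot_ge0.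
rewrite ler_pdivlMr ?cvdot_gt0 //; apply: le_trans (ler_piMr _ v_le1) _.
  by rewrite ler0c.
by rewrite (qform_real rho_psd) lecR ltW.
Qed.

End Mistake.

Lemma residuals_orthogonal (R : realType) d (psi psiS : nat -> 'cV[R[i]]_d)
    (m : nat -> bool) T :
  (forall t, (t < T)%N ->
     is_orth_proj [seq psi s | s <- iota 0 t & m s] (psi t) (psiS t)) ->
  forall s t, (s < t < T)%N -> m s -> m t ->
    cvdot (psi s - psiS s) (psi t - psiS t) = 0.
Proof.
move=> proj s t /andP[st tT] ms mt; have [_ t_orth] := proj t tT.
have [s_span _] := proj s (ltn_trans st tT).
have Ss_sub_St : {subset [seq psi r | r <- iota 0 s & m r] <=
                          [seq psi r | r <- iota 0 t & m r]}.
  move=> x /mapP[r]; rewrite mem_filter mem_iota => /andP[mr /andP[_ rs]] ->.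
  by apply: map_f; rewrite mem_filter mr mem_iota /= (ltn_trans rs st).
rewrite cvdotDl cvdotNl t_orth ?(cvdot_span_eq0 s_span) ?subr0 //.
  by move=> x /Ss_sub_St; apply: t_orth.
by apply: map_f; rewrite mem_filter ms mem_iota.
Qed.

Unset Implicit Arguments.

Theorem mainTheorem15 (R : realType) (d : nat) (rho : 'M[R[i]]_d) (eps : R) :
  density_matrix rho -> 0 < eps ->
  forall (T : nat) (psi psiS : nat -> 'cV[R[i]]_d) (o : nat -> R)
         (m : nat -> bool),
    (forall t, (t < T)%N -> unit_vec (psi t)) ->
    (forall t, (t < T)%N ->
       is_orth_proj [seq psi s | s <- iota 0 t & m s] (psi t) (psiS t)) ->
    (forall t, (t < T)%N ->
       `|qform rho (psiS t) - (o t)%:C| < (3 / 8 * eps)%:C) ->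
    (forall t, (t < T)%N -> m t ->
       (3 / 4 * eps)%:C <= `|qform rho (psi t) - (o t)%:C|) ->
    ((\sum_(t < T) m t)%N%:R <= 256 / 9 / eps ^+ 2 :> R).
Proof.
move=> rho_density eps_gt0 T psi psiS o m psi1 proj oracle mistake.
have [_ rho_psd tr1] := rho_density.
pose v t := psi t - psiS t.
have orth (s t : 'I_T) : m s -> m t -> s != t -> cvdot (v s) (v t) = 0.
  move=> ms mt; rewrite neq_ltn => /orP[st|ts].
    by rewrite (residuals_orthogonal proj) // st ltn_ord.
  by rewrite cvdotC (residuals_orthogonal proj) ?conjc0 // ts ltn_ord.
have lb (t : 'I_T) : m t ->
    (9 / 256 * eps ^+ 2)%:C <= qform rho (v t) / cvdot (v t) (v t).
  move=> mt; have tT := ltn_ord t.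
  exact: (mistake_rayleigh_ge rho_density (psi1 t tT) (proj t tT)
                              (oracle t tT) (mistake t tT mt)).
have := le_trans (ler_sum _ lb) (sum_rayleigh_le_trace rho_psd orth).
rewrite tr1 -rmorph_sum -(rmorph1 (real_complex R)) lecR.
have -> : \sum_(t < T | m t) (9 / 256 * eps ^+ 2) =
          (\sum_(t < T) m t)%N%:R * (9 / 256 * eps ^+ 2).
  rewrite natr_sum mulr_suml big_mkcond; apply: eq_bigr => t _.
  by case: (m t); rewrite ?mul1r ?mul0r.
rewrite ler_pdivlMr ?exprn_gt0 //; lra.
Qed.
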